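(* Let $R$ be a QNA with Goodearl–Yakimov elements $y_1,\ldots,y_N$, let $j\in[1,N]$, $r\in R_j$ and $w\in R$ with $rw\in y_jR$. If $r\notin y_jR_j$, then $w\in y_jR$.
   Context: ${\mathbb K}$ is a field of characteristic $0$. A quantum nilpotent algebra (QNA) is an iterated Ore extension $R={\mathbb K}[x_1][x_2;\sigma_2,\delta_2]\cdots[x_N;\sigma_N,\delta_N]$, where $R_k={\mathbb K}[x_1][x_2;\sigma_2,\delta_2]\cdots[x_k;\sigma_k,\delta_k]$ ($R_0={\mathbb K}$), $\sigma_k$ is a ${\mathbb K}$-automorphism and $\delta_k$ a $\sigma_k$-derivation of $R_{k-1}$, together with a torus $\mathcal H$ acting rationally by ${\mathbb K}$-automorphisms on $R$ with each $x_i$ an $\mathcal H$-eigenvector, such that: (i) $\sigma_k(x_j)=\lambda_{kj}x_j$ for $j<k$, with $\lambda_{kj}\in{\mathbb K}^*$; (ii) $\delta_k$ is locally nilpotent on $R_{k-1}$; (iii) for each $k$ there exist $h_k\in\mathcal H$ and $q_k\in{\mathbb K}^*$ not a root of unity such that $h_k$ acts on $R_{k-1}$ as $\sigma_k$ and $h_k\cdot x_k=q_kx_k$. The rank is $n=|\{k:\delta_k=0\}|$ and $\mathcal H=({\mathbb K}^* )^n$ is taken maximal. Homogeneous elements are the $\mathcal H$-eigenvectors. An element $u$ is normal if $uR=Ru$; a prime element is a nonzero normal $p$ with $pR$ a completely prime ideal. Goodearl–Yakimov elements: there is a surjective map $\mu:[1,N]\to[1,n]$ with predecessor $p(k)=\max\{j<k:\mu(j)=\mu(k)\}$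 (or $-\infty$ if none) and successor $s(k)=\min\{j>k:\mu(j)=\mu(k)\}$ (or $+\infty$ if none), and homogeneous elements $y_1,\ldots,y_N\in R$, uniquely determined, with $y_k=x_k$ if $p(k)=-\infty$ and $y_k=y_{p(k)}x_k-c_k$ for some $c_k\in R_{k-1}$ otherwise, such that for every $k$ the set $\{y_j: j\le k,\ s(j)>k\}$ is, up to nonzero scalars, the set of homogeneous prime elements of $R_k$. Note $y_j\in R_j$. The $y_i$ pairwise quasi-commute. *)

From HB Require Import structures.
From mathcomp Require Import all_boot all_order all_algebra.
Set Implicit Arguments. Unset Strict Implicit. Unset Printing Implicit Defensive.
Import Order.TTheory GRing.Theory Num.Theory.
Local Open Scope ring_scope.

Section QNA.
Variables (K : fieldType) (R : algType K) (x : nat -> R).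

(* R_k : the subalgebra K[x_1][x_2;s_2,d_2]...[x_k;s_k,d_k], i.e. R_0 = K
   and R_k = { sum_i r_i x_k^i : r_i in R_(k-1) } *)
Fixpoint inR (k : nat) (r : R) : Prop :=
  match k with
  | 0 => exists c : K, r = c%:A
  | k'.+1 => exists s : seq R, (forall i, (i < size s)%N -> inR k' s`_i) /\
               r = \sum_(i < size s) s`_i * x k'.+1 ^+ i
  end.

Definition is_Kaut_on (k : nat) (sigma : R -> R) : Prop :=
  (forall a, inR k a -> inR k (sigma a)) /\
  (forall a b, inR k a -> inR k b -> sigma (a + b) = sigma a + sigma b) /\
  (forall a b, inR k a -> inR k b -> sigma (a * b) = sigma a * sigma b) /\
  (forall (c : K) a, inR k a -> sigma (c *: a) = c *: sigma a) /\
  sigma 1 = 1 /\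
  (forall a b, inR k a -> inR k b -> sigma a = sigma b -> a = b) /\
  (forall b, inR k b -> exists2 a, inR k a & sigma a = b).

Definition is_sigma_der_on (k : nat) (sigma delta : R -> R) : Prop :=
  (forall a, inR k a -> inR k (delta a)) /\
  (forall a b, inR k a -> inR k b -> delta (a + b) = delta a + delta b) /\
  (forall (c : K) a, inR k a -> delta (c *: a) = c *: delta a) /\
  (forall a b, inR k a -> inR k b ->
        delta (a * b) = sigma a * delta b + delta a * b).

(* R_k = R_(k-1)[x_k; sigma, delta] (Ore extension): commutation rule and
   R_k is a free left R_(k-1)-module on the powers of x_k *)
Definition is_Ore_step (k : nat) (sigma delta : R -> R) : Prop :=
  is_Kaut_on k.-1 sigma /\
  is_sigma_der_on k.-1 sigma delta /\
  (forall r, inR k.-1 r -> x k * r = sigma r * x k + delta r) /\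
  (forall s : seq R, (forall i, (i < size s)%N -> inR k.-1 s`_i) ->
        \sum_(i < size s) s`_i * x k ^+ i = 0 ->
        forall i, (i < size s)%N -> s`_i = 0).

Definition delta_zero (k : nat) (delta : R -> R) : Prop :=
  forall r, inR k.-1 r -> delta r = 0.

(* the torus H = (Kx)^n (Kx = nonzero scalars), elements h : 'I_n -> K with nonzero entries *)
Definition in_torus (n : nat) (h : 'I_n -> K) : Prop := forall i, h i != 0.

Definition not_root_of_unity (q : K) : Prop :=
  forall m : nat, (0 < m)%N -> q ^+ m != 1.

Definition is_QNA (N n : nat) (sigma delta : nat -> R -> R)
    (act : ('I_n -> K) -> R -> R) : Prop :=
  (forall r, inR N r) /\
  (forall k, (1 <= k <= N)%N -> is_Ore_step k (sigma k) (delta k)) /\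
  (forall k j, (1 <= j)%N -> (j < k <= N)%N ->
        exists2 lam : K, lam != 0 & sigma k (x j) = lam *: x j) /\
  (forall k, (1 <= k <= N)%N -> forall r, inR k.-1 r ->
        exists m : nat, iter m (delta k) r = 0) /\
  (exists2 l : seq nat, uniq l /\ size l = n &
        forall k, k \in l <-> ((1 <= k <= N)%N /\ delta_zero k (delta k))) /\
  (forall h, in_torus h ->
        (forall a b, act h (a + b) = act h a + act h b) /\
        (forall a b, act h (a * b) = act h a * act h b) /\
        (forall (c : K) a, act h (c *: a) = c *: act h a) /\
        act h 1 = 1 /\ bijective (act h)) /\
  (exists e : nat -> 'I_n -> int, forall i, (1 <= i <= N)%N ->
        forall h, in_torus h -> act h (x i) = (\prod_(l < n) h l ^ e i l) *: x i) /\
  (forall h, in_torus h -> (forall r, act h r = r) -> forall l, h l = 1) /\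
  (forall k, (1 <= k <= N)%N -> exists h, exists q : K,
        in_torus h /\ q != 0 /\ not_root_of_unity q /\
        (forall r, inR k.-1 r -> act h r = sigma k r) /\
        act h (x k) = q *: x k).

Definition homogeneous (n : nat) (act : ('I_n -> K) -> R -> R) (u : R) : Prop :=
  u != 0 /\ forall h, in_torus h -> exists c : K, act h u = c *: u.

Definition in_ideal (k : nat) (u a : R) : Prop := exists2 t, inR k t & a = u * t.

Definition prime_elt (k : nat) (u : R) : Prop :=
  inR k u /\ u != 0 /\
  (forall r, inR k r -> exists2 r', inR k r' & u * r = r' * u) /\
  (forall r, inR k r -> exists2 r', inR k r' & r * u = u * r') /\
  ~ in_ideal k u 1 /\
  (forall a b, inR k a -> inR k b -> in_ideal k u (a * b) ->
        in_ideal k u a \/ in_ideal k u b).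

End QNA.

(* predecessor p(k) = max{j < k : mu j = mu k} (None = -oo) *)
Definition gy_pred (mu : nat -> nat) (k : nat) : option nat :=
  let l := [seq j <- iota 1 k.-1 | mu j == mu k] in
  if l is [::] then None else Some (last 0%N l).

(* successor s(k) = min{j > k : mu j = mu k}, j <= N (None = +oo) *)
Definition gy_succ (N : nat) (mu : nat -> nat) (k : nat) : option nat :=
  let l := [seq j <- iota k.+1 (N - k) | mu j == mu k] in
  if l is j :: _ then Some j else None.

Definition succ_gt (N : nat) (mu : nat -> nat) (j k : nat) : bool :=
  if gy_succ N mu j is Some m then (k < m)%N else true.

Definition is_GY (K : fieldType) (R : algType K) (x : nat -> R) (N n : nat)
    (act : ('I_n -> K) -> R -> R) (mu : nat -> nat) (y : nat -> R) : Prop :=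
  (forall k, (1 <= k <= N)%N -> (1 <= mu k <= n)%N) /\
  (forall l, (1 <= l <= n)%N -> exists2 k, (1 <= k <= N)%N & mu k = l) /\
  (forall k, (1 <= k <= N)%N -> homogeneous act (y k)) /\
  (forall k, (1 <= k <= N)%N ->
        match gy_pred mu k with
        | None => y k = x k
        | Some p => exists2 c, inR x k.-1 c & y k = y p * x k - c
        end) /\
  (forall k, (1 <= k <= N)%N ->
        (forall j, (1 <= j <= k)%N -> succ_gt N mu j k ->
           homogeneous act (y j) /\ prime_elt x k (y j)) /\
        (forall u, homogeneous act u -> prime_elt x k u ->
           exists j, (1 <= j <= k)%N /\ succ_gt N mu j k /\
             exists2 c : K, c != 0 & u = c *: y j)).

(* Since [y_j] is a prime element of [R_j], the hypothesis [r \notin y_j R_j]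
   makes left multiplication by [r] cancel modulo [y_j R_j]: [r w \in y_j R_j]
   forces [w \in y_j R_j] for [w \in R_j].  This cancellation property climbs
   the Ore tower: writing [w = \sum_i f_i x_(k+1)^i] and [t = \sum_i g_i x_(k+1)^i]
   with coefficients in [R_k], the equation [r w = y_j t] compares coefficients
   in the free left [R_k]-module [R_(k+1)] to give [r f_i = y_j g_i], hence
   [f_i \in y_j R_k] and [w \in y_j R_(k+1)].  At [k = N] this is the theorem.
   Neither the characteristic nor the torus action plays any role. *)
From HB Require Import structures.
From mathcomp Require Import all_boot all_order all_algebra.
Import GRing.Theory.
Local Open Scope ring_scope.

Set Implicit Arguments.
Unset Strict Implicit.
Unset Printing Implicit Defensive.

Lemma succ_gt_refl (N : nat) (mu : nat -> nat) (j : nat) : succ_gt N mu j j.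
Proof.
rewrite /succ_gt /gy_succ; case E: [seq _ <- _ | _] => [|m l] //.
have : m \in iota j.+1 (N - j) by have := mem_head m l; rewrite -E mem_filter => /andP[].
by rewrite mem_iota => /andP[].
Qed.

Lemma sum_widen (V : nmodType) (F : nat -> V) (m M : nat) : (m <= M)%N ->
  (forall i, (m <= i)%N -> F i = 0) -> \sum_(i < m) F i = \sum_(i < M) F i.
Proof.
move=> lemM F0; rewrite (big_ord_widen _ _ lemM) big_mkcond.
by apply: eq_bigr => i _; case: ltnP => // /F0 ->.
Qed.

Section OreTower.
Variables (K : fieldType) (R : algType K) (x : nat -> R).

Lemma inR0 (k : nat) : inR x k 0.
Proof.
case: k => [|k]; first by exists 0; rewrite scale0r.
by exists [::]; split => //; rewrite big_ord0.
Qed.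

Lemma inRS_sum (k m : nat) (f : nat -> R) : (forall i, (i < m)%N -> inR x k (f i)) ->
  inR x k.+1 (\sum_(i < m) f i * x k.+1 ^+ i).
Proof.
move=> Rf; exists (mkseq f m); rewrite size_mkseq; split.
  by move=> i lt_im; rewrite nth_mkseq //; apply: Rf.
by apply: eq_bigr => i _; rewrite nth_mkseq.
Qed.

Lemma inRSP (k : nat) (a : R) : inR x k.+1 a ->
  exists m (f : nat -> R), (forall i, (i < m)%N -> inR x k (f i)) /\
    a = \sum_(i < m) f i * x k.+1 ^+ i.
Proof. by case=> s [Rs ->]; exists (size s), (nth 0 s). Qed.

Lemma inRS_expand2 (k : nat) (a b : R) : inR x k.+1 a -> inR x k.+1 b ->
  exists m (f g : nat -> R), (forall i, inR x k (f i)) /\ (forall i, inR x k (g i)) /\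
    a = \sum_(i < m) f i * x k.+1 ^+ i /\ b = \sum_(i < m) g i * x k.+1 ^+ i.
Proof.
case=> s [Rs ->] [s' [Rs' ->]].
have Rnth (t : seq R) i : (forall l, (l < size t)%N -> inR x k t`_l) -> inR x k t`_i.
  by move=> Rt; case: (ltnP i (size t)) => [/Rt // | ?]; rewrite nth_default //; apply: inR0.
have widen (t : seq R) M : (size t <= M)%N ->
    \sum_(i < size t) t`_i * x k.+1 ^+ i = \sum_(i < M) t`_i * x k.+1 ^+ i.
  move=> ?; apply: (sum_widen (F := fun i => t`_i * x k.+1 ^+ i)) => // i ?.
  by rewrite nth_default ?mul0r.
exists (maxn (size s) (size s')), (nth 0 s), (nth 0 s').
rewrite (widen s _ (leq_maxl _ (size s'))) (widen s' _ (leq_maxr (size s) _)).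
by split; [|split] => // i; apply: Rnth.
Qed.

Lemma inR_add (k : nat) (a b : R) : inR x k a -> inR x k b -> inR x k (a + b).
Proof.
elim: k a b => [|k IHk] a b; first by case=> c -> [d ->]; exists (c + d); rewrite scalerDl.
move=> Ra Rb; have [m [f [g [Rf [Rg [-> ->]]]]]] := inRS_expand2 Ra Rb.
rewrite -big_split (eq_bigr (fun i : 'I_m => (f i + g i) * x k.+1 ^+ i)) => [|i _];
  last by rewrite mulrDl.
by apply: (@inRS_sum k m (fun i => f i + g i)) => i _; apply: IHk.
Qed.

Lemma inR_opp (k : nat) (a : R) : inR x k a -> inR x k (- a).
Proof.
elim: k a => [|k IHk] a; first by case=> c ->; exists (- c); rewrite scaleNr.
move=> /inRSP[m [f [Rf ->]]]; rewrite -sumrN.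
rewrite (eq_bigr (fun i : 'I_m => - f i * x k.+1 ^+ i)) => [|i _]; last by rewrite mulNr.
by apply: (@inRS_sum k m (fun i => - f i)) => i lt_im; apply/IHk/Rf.
Qed.

Lemma inR_sum (k : nat) (I : Type) (s : seq I) (P : pred I) (F : I -> R) :
  (forall i, P i -> inR x k (F i)) -> inR x k (\sum_(i <- s | P i) F i).
Proof. by move=> RF; apply: (big_ind (inR x k)); [apply: inR0 | apply: inR_add |]. Qed.

Lemma inR_mulXn (k i : nat) (c : R) : inR x k c -> inR x k.+1 (c * x k.+1 ^+ i).
Proof.
move=> Rc; exists (rcons (nseq i 0) c); rewrite size_rcons size_nseq; split.
  move=> l; rewrite ltnS leq_eqVlt => /orP[/eqP-> | lt_li].
    by rewrite nth_rcons size_nseq ltnn eqxx.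
  by rewrite nth_rcons size_nseq lt_li nth_nseq lt_li; apply: inR0.
rewrite big_ord_recr /= nth_rcons size_nseq ltnn eqxx big1 ?add0r // => l _.
by rewrite nth_rcons size_nseq ltn_ord nth_nseq ltn_ord mul0r.
Qed.

Lemma inR_mono (j k : nat) (a : R) : (j <= k)%N -> inR x j a -> inR x k a.
Proof.
move=> /subnK <-; elim: (k - j)%N => [//|d IHd] Ra.
by rewrite addSn -[a]mulr1 -(expr0 (x (d + j).+1)); apply/inR_mulXn/IHd.
Qed.

Lemma in_ideal_sum (k : nat) (u : R) (I : Type) (s : seq I) (P : pred I) (F : I -> R) :
  (forall i, P i -> in_ideal x k u (F i)) -> in_ideal x k u (\sum_(i <- s | P i) F i).
Proof.
move=> uF; apply: (big_ind (in_ideal x k u)) => //.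
  by exists 0; [apply: inR0 | rewrite mulr0].
by move=> _ _ [a Ra ->] [b Rb ->]; exists (a + b); [apply: inR_add | rewrite mulrDr].
Qed.

Lemma in_ideal_mulXn (k i : nat) (u a : R) :
  in_ideal x k u a -> in_ideal x k.+1 u (a * x k.+1 ^+ i).
Proof. by case=> t Rt ->; exists (t * x k.+1 ^+ i); [apply: inR_mulXn | rewrite mulrA]. Qed.

Lemma Ore_coef_inj (k m : nat) (sg dl : R -> R) (f g : nat -> R) :
  is_Ore_step x k.+1 sg dl -> (forall i, inR x k (f i)) -> (forall i, inR x k (g i)) ->
  \sum_(i < m) f i * x k.+1 ^+ i = \sum_(i < m) g i * x k.+1 ^+ i ->
  forall i, (i < m)%N -> f i = g i.
Proof.
case=> _ [_ [_ free]] Rf Rg fg i lt_im; apply/eqP; rewrite -subr_eq0; apply/eqP.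
suff: (mkseq (fun l => f l - g l) m)`_i = 0 by rewrite nth_mkseq.
apply: free; rewrite ?size_mkseq //.
  by move=> l lt_lm; rewrite nth_mkseq //; apply/inR_add/inR_opp.
rewrite (eq_bigr (fun l : 'I_m => f l * x k.+1 ^+ l - g l * x k.+1 ^+ l)) => [|l _].
  by rewrite sumrB fg subrr.
by rewrite nth_mkseq // mulrBl.
Qed.

End OreTower.

Section Cancellation.
Variables (K : fieldType) (R : algType K) (x : nat -> R) (N : nat).
Variables (sigma delta : nat -> R -> R).
Hypothesis Ore : forall k, (1 <= k <= N)%N -> is_Ore_step x k (sigma k) (delta k).

Lemma inR_mulX (k : nat) (b : R) : (k < N)%N -> inR x k.+1 b -> inR x k.+1 (x k.+1 * b).
Proof.
move=> lt_kN; have [[Rsigma _] [[Rdelta _] [comm _]]] := Ore (k := k.+1) lt_kN.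
move=> /inRSP[m [f [Rf ->]]]; rewrite mulr_sumr; apply: inR_sum => i _.
have Rfi := Rf i (ltn_ord i).
rewrite mulrA comm // mulrDl -mulrA -exprS.
by apply: inR_add; apply: inR_mulXn; [apply: Rsigma | apply: Rdelta].
Qed.

Lemma inR_mul (k : nat) (a b : R) : (k <= N)%N -> inR x k a -> inR x k b -> inR x k (a * b).
Proof.
elim: k a b => [|k IHk] a b le_kN.
  by case=> c -> [d ->]; exists (c * d); rewrite -scalerAl mul1r scalerA.
have XnR i c : inR x k.+1 c -> inR x k.+1 (x k.+1 ^+ i * c).
  by elim: i => [|i IHi] Rc; rewrite ?mul1r // exprS -mulrA; apply/inR_mulX/IHi.
move=> /inRSP[m [f [Rf ->]]] Rb; rewrite mulr_suml; apply: inR_sum => i _; rewrite -mulrA.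
have [m' [g [Rg ->]]] := inRSP (XnR i b Rb).
rewrite mulr_sumr; apply: inR_sum => l _.
by rewrite mulrA; apply/inR_mulXn/IHk; [apply: ltnW | apply: Rf | apply: Rg].
Qed.

Definition cancels_mod (k : nat) (u r : R) : Prop :=
  forall w t, inR x k w -> inR x k t -> r * w = u * t -> in_ideal x k u w.

Lemma cancels_mod_prime (k : nat) (u r : R) :
  prime_elt x k u -> inR x k r -> ~ in_ideal x k u r -> cancels_mod k u r.
Proof.
case=> _ [_ [_ [_ [_ completely_prime]]]] Rr r_notin w t Rw Rt e.
by case: (completely_prime r w Rr Rw); first exists t.
Qed.

Lemma cancels_modS (k : nat) (u r : R) : (k < N)%N -> inR x k u -> inR x k r ->
  cancels_mod k u r -> cancels_mod k.+1 u r.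
Proof.
move=> lt_kN Ru Rr cancel w t Rw Rt e.
have [m [f [g [Rf [Rg [defw deft]]]]]] := inRS_expand2 Rw Rt.
have coef : forall i, (i < m)%N -> r * f i = u * g i.
  apply: (Ore_coef_inj (Ore (k := k.+1) lt_kN)) => [i|i|]; try exact: inR_mul (ltnW lt_kN) _ _.
  move: e; rewrite defw deft !mulr_sumr.
  by under eq_bigr do rewrite mulrA; under [in X in _ = X -> _]eq_bigr do rewrite mulrA.
rewrite defw; apply: in_ideal_sum => i _; apply: in_ideal_mulXn.
exact: cancel (Rf i) (Rg i) (coef i (ltn_ord i)).
Qed.

Lemma cancels_mod_lift (j k : nat) (u r : R) : (j <= k <= N)%N -> inR x j u -> inR x j r ->
  cancels_mod j u r -> cancels_mod k u r.
Proof.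
case/andP; elim: k => [|k IHk]; first by rewrite leqn0 => /eqP->.
rewrite leq_eqVlt ltnS => /orP[/eqP<- // | le_jk] lt_kN Ru Rr cancel.
apply: cancels_modS => //; try exact: inR_mono le_jk _.
exact: IHk le_jk (ltnW lt_kN) Ru Rr cancel.
Qed.

End Cancellation.

Theorem lemmaA1 (K : fieldType) (R : algType K) (N n : nat) (x : nat -> R)
    (sigma delta : nat -> R -> R) (act : ('I_n -> K) -> R -> R)
    (mu : nat -> nat) (y : nat -> R)
    (Hchar : [pchar K] =i pred0)
    (HQNA : is_QNA x N sigma delta act)
    (HGY : is_GY x N act mu y)
    (j : nat) (r w : R) :
  (1 <= j <= N)%N -> inR x j r ->
  (exists t, r * w = y j * t) ->
  ~ (in_ideal x j (y j) r) ->
  exists t, w = y j * t.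
Proof.
move=> /andP[j_gt0 le_jN] Rr [t e] r_notin.
have [RN [Ore _]] := HQNA.
have [_ [_ [_ [_ GYprime]]]] := HGY.
have [_ yj_prime] : homogeneous act (y j) /\ prime_elt x j (y j).
  by apply: (GYprime j _).1; rewrite ?j_gt0 ?leqnn ?succ_gt_refl.
have cancel_j := cancels_mod_prime yj_prime Rr r_notin.
have cancel_N : cancels_mod x N (y j) r.
  by apply: (cancels_mod_lift Ore _ yj_prime.1 Rr cancel_j); rewrite le_jN leqnn.
by have [s _ ->] := cancel_N _ _ (RN w) (RN t) e; exists s.
Qed.
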